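(* Let $L=Rd$ with $R,d$ positive integers, and let $\Phi,\Psi$ be two unitary $L\times L$ matrices, partitioned into consecutive column-blocks $\Phi[\ell],\Psi[\ell]$ of size $L\times d$, $1\le \ell\le R$. Let ${\bf x}\in\mathbb{C}^L$, ${\bf x}\neq {\bf 0}$, satisfy $${\bf x}=\sum_{\ell=1}^R \Phi[\ell]{\bf a}[\ell]=\sum_{\ell=1}^R \Psi[\ell]{\bf b}[\ell]$$ with ${\bf a}[\ell],{\bf b}[\ell]\in\mathbb{C}^d$, and let $A=\|{\bf a}\|_{2,0}$, $B=\|{\bf b}\|_{2,0}$. Then $$\frac{1}{2}(A+B)\ge \sqrt{AB}\ge \frac{1}{d\,\mu_{\mathrm B}(\Phi,\Psi)},\qquad\text{where }\ \mu_{\mathrm B}(\Phi,\Psi)=\max_{\ell,r}\frac{1}{d}\rho(\Phi^H[\ell]\Psi[r]).$$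
   Context: For a matrix ${\bf M}$, $\rho({\bf M})=\lambda_{\max}^{1/2}({\bf M}^H{\bf M})$ denotes its spectral norm. For a vector ${\bf a}\in\mathbb{C}^{L}$ viewed as a concatenation of consecutive length-$d$ blocks ${\bf a}[1],\dots,{\bf a}[R]$, $\|{\bf a}\|_{2,0}$ denotes the number of indices $\ell$ with $\|{\bf a}[\ell]\|_2>0$. *)

From HB Require Import structures.
From mathcomp Require Import all_boot all_order all_algebra.
From mathcomp Require Import spectral.
From mathcomp Require Import complex.
From mathcomp Require Import classical_sets reals.
Set Implicit Arguments. Unset Strict Implicit. Unset Printing Implicit Defensive.
Import Order.TTheory GRing.Theory Num.Theory.
Local Open Scope ring_scope.
Local Open Scope sesquilinear_scope.
Local Open Scope complex_scope.

Definition lambda_max (F : realType) (n : nat) (N : 'M[F[i]]_n) : F :=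
  sup [set r : F | eigenvalue N (r%:C)].

Definition specnorm (F : realType) (m n : nat) (M : 'M[F[i]]_(m, n)) : F :=
  Num.sqrt (lambda_max (M ^t* *m M)).

(* l-th column block (size L x d) of an L x (R*d) matrix, 0-indexed: columns l*d .. l*d+d-1 *)
Definition colblk (C : Type) (L R d : nat) (M : 'M[C]_(L, R * d)) (l : 'I_R)
  : 'M[C]_(L, d) := \matrix_(i, j) M i (mxvec_index l j).

Definition vblk (C : Type) (R d : nat) (a : 'cV[C]_(R * d)) (l : 'I_R) : 'cV[C]_d :=
  \col_j a (mxvec_index l j) 0.

Definition l2norm (C : numClosedFieldType) (d : nat) (v : 'cV[C]_d) : C :=
  sqrtC (\sum_j `|v j 0| ^+ 2).

Definition norm20 (C : numClosedFieldType) (R d : nat) (a : 'cV[C]_(R * d)) : nat :=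
  #|[set l : 'I_R | 0 < l2norm (vblk a l)]|.

Definition muB (F : realType) (R d : nat) (Phi Psi : 'M[F[i]]_(R * d)) : F :=
  \big[Num.max/0]_(l < R) \big[Num.max/0]_(r < R)
     (specnorm ((colblk Phi l) ^t* *m colblk Psi r) / d%:R).

From HB Require Import structures.
From mathcomp Require Import all_boot all_order all_algebra.
From mathcomp Require Import spectral.
From mathcomp Require Import complex.
From mathcomp Require Import classical_sets reals.
From mathcomp Require Import lra.
Import Order.TTheory GRing.Theory Num.Theory.
Local Open Scope ring_scope.
Local Open Scope sesquilinear_scope.
Local Open Scope complex_scope.
Set Implicit Arguments. Unset Strict Implicit. Unset Printing Implicit Defensive.

(** Expand <x, x> once along the Phi-blocks and once along the Psi-blocks:
   <x, x> = sum_(l, r) <a[l], Phi[l]^H Psi[r] b[r]>, and each term is at most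
   d mu_B |a[l]| |b[r]| (Cauchy-Schwarz and the Rayleigh bound
   |M v| <= rho(M) |v|).  Hence <x, x> <= d mu_B (sum_l |a[l]|)(sum_r |b[r]|).
   Since at most A blocks of a are nonzero, Cauchy-Schwarz and Parseval give
   sum_l |a[l]| <= sqrt A |x|, and likewise for b; dividing by |x|^2 > 0
   yields 1 <= d mu_B sqrt(A B).  The other inequality is AM-GM. *)

Section ColumnInnerProduct.
Variable C : numClosedFieldType.

Definition dotcv n (u v : 'cV[C]_n) : C := \sum_i (u i 0)^* * v i 0.

Lemma dotcvE n (u v : 'cV[C]_n) : dotcv u v = (u ^t* *m v) 0 0.
Proof. by rewrite /dotcv mxE; apply: eq_bigr => i _; rewrite !mxE. Qed.

Lemma dotcv_mulmxr m n (M : 'M[C]_(m, n)) u v :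
  dotcv u (M *m v) = dotcv (M ^t* *m u) v.
Proof. by rewrite !dotcvE trmx_mul map_mxM trmxCK mulmxA. Qed.

Lemma dotcv_mulmxl m n (M : 'M[C]_(m, n)) u v :
  dotcv (M *m u) v = dotcv u (M ^t* *m v).
Proof. by rewrite dotcv_mulmxr trmxCK. Qed.

Lemma dotcv0r n (u : 'cV[C]_n) : dotcv u 0 = 0.
Proof. by rewrite /dotcv big1 // => i _; rewrite mxE mulr0. Qed.

Lemma dotcv_suml n I (r : seq I) (P : pred I) (v : 'cV[C]_n) f :
  dotcv (\sum_(i <- r | P i) f i) v = \sum_(i <- r | P i) dotcv (f i) v.
Proof.
rewrite /dotcv exchange_big /=; apply: eq_bigr => k _.
by rewrite summxE rmorph_sum mulr_suml.
Qed.

Lemma dotcv_sumr n I (r : seq I) (P : pred I) (u : 'cV[C]_n) f :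
  dotcv u (\sum_(i <- r | P i) f i) = \sum_(i <- r | P i) dotcv u (f i).
Proof.
rewrite /dotcv exchange_big /=; apply: eq_bigr => k _.
by rewrite summxE mulr_sumr.
Qed.

Lemma dotcv_ge0 n (u : 'cV[C]_n) : 0 <= dotcv u u.
Proof. by apply: sumr_ge0 => i _; rewrite mulrC mul_conjC_ge0. Qed.

Lemma dotcv_eq0 n (u : 'cV[C]_n) : (dotcv u u == 0) = (u == 0).
Proof.
apply/idP/eqP => [|->]; last by rewrite dotcv0r.
rewrite psumr_eq0 => [/allP u0|i _]; last by rewrite mulrC mul_conjC_ge0.
apply/matrixP => i j; rewrite ord1 mxE.
by have /implyP/(_ isT) := u0 i (mem_index_enum i); rewrite mulrC mul_conjC_eq0 => /eqP.
Qed.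

Lemma dotcv_dotmx n (u v : 'cV[C]_n) : dotcv u v = dotmx v^T u^T.
Proof. by rewrite dotmxE /dotcv mxE; apply: eq_bigr => i _; rewrite !mxE mulrC. Qed.

Lemma l2normE n (v : 'cV[C]_n) : l2norm v = sqrtC (dotcv v v).
Proof.
by rewrite /l2norm /dotcv; congr sqrtC; apply: eq_bigr => j _; rewrite normCK mulrC.
Qed.

Lemma l2norm_ge0 n (v : 'cV[C]_n) : 0 <= l2norm v.
Proof. by rewrite l2normE sqrtC_ge0 dotcv_ge0. Qed.

Lemma dotcvv n (v : 'cV[C]_n) : dotcv v v = l2norm v ^+ 2.
Proof. by rewrite l2normE sqrtCK. Qed.

Lemma dotcv_CauchySchwarz n (u v : 'cV[C]_n) :
  `|dotcv u v| <= l2norm u * l2norm v.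
Proof.
rewrite !l2normE !dotcv_dotmx mulrC.
exact: (CauchySchwarz_sqrt (@dotmx C n) v^T u^T).1.
Qed.

End ColumnInnerProduct.

Section SpectralNormBound.
Variables (F : realType) (m n : nat) (M : 'M[F[i]]_(m, n)).

Let N := M ^t* *m M.
Let P := spectralmx N.
Let D := spectral_diag N.

Let P_unitary : P \is unitarymx.
Proof. exact: spectral_unitarymx. Qed.

Let PPadj : P *m P ^t* = 1%:M.
Proof. exact/unitarymxP. Qed.

Let PadjP : P ^t* *m P = 1%:M.
Proof. exact: mulmx1C. Qed.

Let N_spectral : N = P ^t* *m diag_mx D *m P.
Proof.
have N_normal : N \is normalmx by apply/normalmxP; rewrite /N trmx_mul map_mxM trmxCK.
by rewrite -invmx_unitary //; apply/orthomx_spectralP.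
Qed.

Let diag_D : diag_mx D = P *m N *m P ^t*.
Proof. by rewrite N_spectral !mulmxA PPadj mul1mx -mulmxA PPadj mulmx1. Qed.

Lemma gram_spectral_diag_ge0 j : 0 <= D 0 j.
Proof.
have -> : D 0 j = dotcv (delta_mx j 0) (diag_mx D *m delta_mx j 0).
  rewrite mul_diag_mx /dotcv (bigD1 j) //= big1 => [|i /negPf ij].
    by rewrite !mxE eqxx /= conjC1 mul1r mulr1 addr0.
  by rewrite !mxE ij conjC0 mul0r.
rewrite diag_D -!mulmxA dotcv_mulmxr dotcv_mulmxr trmxCK; exact: dotcv_ge0.
Qed.

Lemma gram_eigenvalue_spectral_diag (r : F) :
  eigenvalue N r%:C -> exists k, D 0 k = r%:C.
Proof.
move=> /eigenvalueP [y yN y0]; set w := y *m P ^t*.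
have wD : w *m diag_mx D = r%:C *: w.
  rewrite /w diag_D !mulmxA -(mulmxA y) PadjP mulmx1 -(mulmxA y (M ^t*)) -/N yN.
  by rewrite -scalemxAl.
have [k wk] : exists k, w 0 k != 0.
  apply/existsP; apply: contraNT y0; rewrite negb_exists => /forallP w_neq0.
  have w0 : w = 0.
    by apply/matrixP => i j; rewrite ord1 [RHS]mxE; apply/eqP/negPn; exact: w_neq0.
  by rewrite -[y]mulmx1 -PadjP mulmxA -/w w0 mul0mx.
exists k; clearbody w; move/matrixP/(_ 0 k): wD; rewrite mul_mx_diag !mxE mulrC.
exact: mulIf.
Qed.

Lemma gram_spectral_diag_le j : D 0 j <= (lambda_max N)%:C.
Proof.
have DR k : (complex.Re (D 0 k))%:C = D 0 k.
  by rewrite RRe_real // ger0_real // gram_spectral_diag_ge0.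
have eigD : eigenvalue N (complex.Re (D 0 j))%:C.
  rewrite DR; apply/eigenvalueP; exists (row j P).
    have PN : P *m N = diag_mx D *m P by rewrite diag_D -(mulmxA (P *m N)) PadjP mulmx1.
    by rewrite -row_mul PN mul_diag_mx; apply/rowP => k; rewrite !mxE.
  apply/eqP => Pj0; have := row_unitarymxP P_unitary j j.
  by rewrite Pj0 dotmxE mul0mx mxE eqxx => /eqP; rewrite eq_sym oner_eq0.
have eig_bounded : has_ubound [set r : F | eigenvalue N r%:C]%classic.
  exists (\sum_k `|complex.Re (D 0 k)|) => r /gram_eigenvalue_spectral_diag [k Dk].
  rewrite (_ : r = complex.Re (D 0 k)); last by rewrite Dk.
  by apply: le_trans (ler_norm _) _; rewrite (bigD1 k) //= lerDl sumr_ge0.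
rewrite -DR lecR; exact: (ub_le_sup eig_bounded eigD).
Qed.

Lemma l2norm_mulmx_le (v : 'cV[F[i]]_n) :
  l2norm (M *m v) <= (specnorm M)%:C * l2norm v.
Proof.
have sM0 : 0 <= (specnorm M)%:C by rewrite lecR sqrtr_ge0.
rewrite -[_%:C]sqrCK // !l2normE -sqrtCM ?nnegrE ?exprn_ge0 ?dotcv_ge0 //.
rewrite ler_sqrtC ?nnegrE ?mulr_ge0 ?exprn_ge0 ?dotcv_ge0 //.
set w := P *m v.
have -> : dotcv (M *m v) (M *m v) = \sum_i D 0 i * ((w i 0)^* * w i 0).
  rewrite dotcv_mulmxl mulmxA -/N N_spectral -!mulmxA dotcv_mulmxr trmxCK.
  by apply: eq_bigr => i _; rewrite -/w mul_diag_mx [X in _ * X]mxE mulrCA.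
have <- : dotcv w w = dotcv v v by rewrite /w dotcv_mulmxl mulmxA PadjP mul1mx.
apply: (@le_trans _ _ ((lambda_max N)%:C * dotcv w w)).
  rewrite mulr_sumr; apply: ler_sum => i _.
  by apply: ler_wpM2r (gram_spectral_diag_le i); rewrite mulrC mul_conjC_ge0.
apply: ler_wpM2r; first exact: dotcv_ge0.
rewrite -rmorphXn lecR /specnorm -/N.
have [N0|N0] := leP 0 (lambda_max N); first by rewrite sqr_sqrtr.
by rewrite ltr0_sqrtr // expr0n /= ltW.
Qed.

End SpectralNormBound.

Section Blocks.
Variables (C : numClosedFieldType) (R d : nat).

Lemma mxvec_index_eq (i k : 'I_R) (j l : 'I_d) :
  (mxvec_index i j == mxvec_index k l) = (i == k) && (j == l).
Proof.
apply/eqP/andP => [|[/eqP-> /eqP->] //].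
by move/cast_ord_inj/enum_rank_inj => [-> ->].
Qed.

Lemma colblk_unitary (Phi : 'M[C]_(R * d)) l k :
  Phi \is unitarymx ->
  (colblk Phi l) ^t* *m colblk Phi k = if l == k then 1%:M else 0.
Proof.
move=> /unitarymxP/mulmx1C PhiPhi; apply/matrixP => i j.
have -> : (if l == k then 1%:M else 0 : 'M[C]_d) i j = ((l == k) && (i == j))%:R.
  by case: (l == k); rewrite !mxE.
have := congr1 (fun X : 'M[C]_(R * d) => X (mxvec_index l i) (mxvec_index k j)) PhiPhi.
rewrite !mxE mxvec_index_eq => <-.
by apply: eq_bigr => s _; rewrite /colblk !mxE.
Qed.

Lemma dotcv_blocks (Phi Psi : 'M[C]_(R * d)) (x a b : 'cV[C]_(R * d)) :
  x = \sum_(l < R) colblk Phi l *m vblk a l ->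
  x = \sum_(l < R) colblk Psi l *m vblk b l ->
  dotcv x x =
  \sum_l \sum_r dotcv (vblk a l) ((colblk Phi l) ^t* *m colblk Psi r *m vblk b r).
Proof.
move=> xa xb; rewrite {1}xa {1}xb dotcv_suml; apply: eq_bigr => l _.
by rewrite dotcv_sumr; apply: eq_bigr => r _; rewrite dotcv_mulmxl mulmxA.
Qed.

Lemma l2norm_blocks (Phi : 'M[C]_(R * d)) (x a : 'cV[C]_(R * d)) :
  Phi \is unitarymx ->
  x = \sum_(l < R) colblk Phi l *m vblk a l ->
  l2norm x ^+ 2 = \sum_l l2norm (vblk a l) ^+ 2.
Proof.
move=> PhiU xa; rewrite -dotcvv (dotcv_blocks xa xa); apply: eq_bigr => l _.
rewrite (bigD1 l) //= colblk_unitary // eqxx mul1mx dotcvv big1 ?addr0 // => k kl.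
by rewrite colblk_unitary // eq_sym (negPf kl) mul0mx dotcv0r.
Qed.

(** Cauchy-Schwarz against the indicator vector of the nonzero blocks. *)
Lemma sum_l2norm_blocks_le (a : 'cV[C]_(R * d)) :
  \sum_l l2norm (vblk a l) <=
  sqrtC (norm20 a)%:R * sqrtC (\sum_l l2norm (vblk a l) ^+ 2).
Proof.
set S := [set l | 0 < l2norm (vblk a l)].
set u := \row_l l2norm (vblk a l); set v := \row_l ((l \in S)%:R : C).
have uv : dotmx u v = \sum_l l2norm (vblk a l).
  rewrite dotmxE mxE; apply: eq_bigr => l _; rewrite !mxE inE.
  have [|] := boolP (0 < l2norm (vblk a l)); first by rewrite conjC1 mulr1.
  by rewrite lt_def l2norm_ge0 andbT negbK => /eqP->; rewrite mul0r.
have vv : dotmx v v = (norm20 a)%:R.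
  rewrite dotmxE mxE /norm20 -/S -sumr_const [RHS]big_mkcond; apply: eq_bigr => l _.
  by rewrite !mxE; case: (l \in S); rewrite ?conjC1 ?conjC0 ?mulr1 ?mulr0.
have uu : dotmx u u = \sum_l l2norm (vblk a l) ^+ 2.
  rewrite dotmxE mxE; apply: eq_bigr => l _; rewrite !mxE.
  by rewrite conj_Creal ?ger0_real ?l2norm_ge0 // expr2.
rewrite -uv -vv -uu -[X in X <= _]ger0_norm ?uv ?sumr_ge0 // => [|l _].
  rewrite -uv mulrC; exact: (CauchySchwarz_sqrt (@dotmx C R) u v).1.
exact: l2norm_ge0.
Qed.

End Blocks.

Section Uncertainty.
Variables (F : realType) (R d : nat) (Phi Psi : 'M[F[i]]_(R * d)).

Lemma muB_ge0 : 0 <= muB Phi Psi.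
Proof. exact: bigmax_ge_id. Qed.

Lemma specnorm_colblk_le l r : (0 < d)%N ->
  specnorm ((colblk Phi l) ^t* *m colblk Psi r) <= d%:R * muB Phi Psi.
Proof.
move=> d_gt0; rewrite -ler_pdivrMl ?ltr0n //= mulrC.
apply: le_trans (le_bigmax _ _ l).
exact: (le_bigmax _ (fun r => specnorm ((colblk Phi l) ^t* *m colblk Psi r) / d%:R) r).
Qed.

Lemma dotcv_blocks_le (x a b : 'cV[F[i]]_(R * d)) : (0 < d)%N ->
  x = \sum_(l < R) colblk Phi l *m vblk a l ->
  x = \sum_(l < R) colblk Psi l *m vblk b l ->
  l2norm x ^+ 2 <= (d%:R * muB Phi Psi)%:C *
    ((\sum_l l2norm (vblk a l)) * (\sum_r l2norm (vblk b r))).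
Proof.
move=> d_gt0 xa xb.
rewrite -dotcvv -[X in X <= _]ger0_norm ?dotcv_ge0 // (dotcv_blocks xa xb).
apply: le_trans (ler_norm_sum _ _ _) _.
rewrite mulr_suml mulr_sumr; apply: ler_sum => l _.
rewrite !mulr_sumr; apply: le_trans (ler_norm_sum _ _ _) _; apply: ler_sum => r _.
apply: le_trans (dotcv_CauchySchwarz _ _) _.
rewrite mulrCA; apply: ler_wpM2l; first exact: l2norm_ge0.
apply: le_trans (l2norm_mulmx_le _ _) _.
by apply: ler_wpM2r; rewrite ?l2norm_ge0 // lecR specnorm_colblk_le.
Qed.

Lemma sqrtC_natr n : sqrtC (n%:R : F[i]) = (Num.sqrt (n%:R : F))%:C.
Proof.
have -> : (n%:R : F[i]) = ((Num.sqrt (n%:R : F)) ^+ 2)%:C.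
  by rewrite sqr_sqrtr ?ler0n // rmorph_nat.
by rewrite rmorphXn sqrCK // lecR sqrtr_ge0.
Qed.

Lemma coherence_uncertainty (x a b : 'cV[F[i]]_(R * d)) : (0 < d)%N ->
  Phi \is unitarymx -> Psi \is unitarymx -> x != 0 ->
  x = \sum_(l < R) colblk Phi l *m vblk a l ->
  x = \sum_(l < R) colblk Psi l *m vblk b l ->
  1 <= d%:R * muB Phi Psi * Num.sqrt ((norm20 a * norm20 b)%:R : F).
Proof.
move=> d_gt0 PhiU PsiU x0 xa xb.
set c := (d%:R * muB Phi Psi)%:C; set X := l2norm x ^+ 2.
have X_gt0 : 0 < X by rewrite /X -dotcvv lt_def dotcv_eq0 x0 dotcv_ge0.
have c_ge0 : 0 <= c by rewrite lecR mulr_ge0 ?ler0n ?muB_ge0.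
have sum_ge0 y : 0 <= \sum_l l2norm (vblk y l).
  by apply: sumr_ge0 => l _; exact: l2norm_ge0.
have sum_le U (y : 'cV[F[i]]_(R * d)) : U \is unitarymx ->
    x = \sum_(l < R) colblk U l *m vblk y l ->
    \sum_l l2norm (vblk y l) <= (Num.sqrt ((norm20 y)%:R : F))%:C * l2norm x.
  move=> UU xy; rewrite -sqrtC_natr; apply: le_trans (sum_l2norm_blocks_le y) _.
  by rewrite -(l2norm_blocks UU xy) sqrCK ?l2norm_ge0.
set sA := Num.sqrt ((norm20 a)%:R : F); set sB := Num.sqrt ((norm20 b)%:R : F).
have : X <= (d%:R * muB Phi Psi * (sA * sB))%:C * X.
  apply: le_trans (dotcv_blocks_le d_gt0 xa xb) _.
  have -> : (d%:R * muB Phi Psi * (sA * sB))%:C = c * (sA%:C * sB%:C).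
    by rewrite /c !rmorphM.
  rewrite -mulrA ler_wpM2l // /X expr2 mulrACA.
  apply: ler_pM; [exact: sum_ge0 | exact: sum_ge0 | |].
  - exact: sum_le PhiU xa.
  - exact: sum_le PsiU xb.
rewrite -{1}[X]mul1r ler_pM2r // -[1]/(1%:C) lecR.
by rewrite (natrM _ (norm20 a)) sqrtrM ?ler0n // mulrA.
Qed.

Lemma sqrtr_natrM_le_mean (A B : nat) :
  Num.sqrt ((A * B)%:R : F) <= (A + B)%:R / 2.
Proof.
rewrite natrM natrD sqrtrM ?ler0n //.
have hA := sqr_sqrtr (ler0n F A); have hB := sqr_sqrtr (ler0n F B).
set sA := Num.sqrt _ in hA *; set sB := Num.sqrt _ in hB *.
rewrite -hA -hB; have := sqr_ge0 (sA - sB); nra.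
Qed.

End Uncertainty.

Unset Implicit Arguments.

Theorem theorem1 (F : realType) (R d : nat) (hR : (0 < R)%N) (hd : (0 < d)%N)
  (Phi Psi : 'M[F[i]]_(R * d)) (x a b : 'cV[F[i]]_(R * d)) :
  Phi \is unitarymx -> Psi \is unitarymx ->
  x != 0 ->
  x = \sum_(l < R) colblk Phi l *m vblk a l ->
  x = \sum_(l < R) colblk Psi l *m vblk b l ->
  let A := norm20 a in let B := norm20 b in
  Num.sqrt ((A * B)%:R : F) <= (A + B)%:R / 2 /\
  1 / (d%:R * muB Phi Psi) <= Num.sqrt ((A * B)%:R : F).
Proof.
move=> PhiU PsiU x0 xa xb A B; split; first exact: sqrtr_natrM_le_mean.
have := coherence_uncertainty hd PhiU PsiU x0 xa xb; rewrite -/A -/B => le1.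
have mu_gt0 : 0 < d%:R * muB Phi Psi.
  rewrite lt_def mulr_ge0 ?ler0n ?muB_ge0 // andbT.
  by apply: contraTneq le1 => ->; rewrite mul0r ler10.
by rewrite ler_pdivrMr // mulrC.
Qed.
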